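(* Let $\sqrt{2} = (1.b_1 b_2 b_3 \cdots)_2$ be the binary expansion of $\sqrt 2$. For integers $n \geq 2$, let $L_n(x) = \left\lfloor \frac{x(2^n - x)}{2^{n-2}} \right\rfloor$ for $x \in X_n = \{1, 2, \dots, 2^n - 1\}$, and call $n$ undesirable if there exists $x \in X_n$ with $L_n(x) = 2^{n-1}$. Then an integer $n \geq 2$ is undesirable if $$(0.b_{n-1} b_n b_{n+1} \cdots)_2 \leq (0.01 b_1 b_2 b_3 \cdots)_2 .$$
   Context: $(0.c_1c_2c_3\cdots)_2$ denotes the real number $\sum_{j \ge 1} c_j 2^{-j}$. *)

From Stdlib Require Import Reals ZArith Arith.
From Coquelicot Require Import Coquelicot.
Open Scope R_scope.

(* (0.c_1 c_2 c_3 ...)_2 = sum_{j >= 1} c_j 2^{-j}  (digits c_j, j >= 1) *)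
Definition binval (c : nat -> nat) : R :=
  Series (fun k => INR (c (S k)) / 2 ^ (S k)).

Definition Ln (n : nat) (x : Z) : Z :=
  Z.div (x * (2 ^ Z.of_nat n - x)) (2 ^ Z.of_nat (n - 2)).

Definition undesirable (n : nat) : Prop :=
  exists x : Z, (1 <= x <= 2 ^ Z.of_nat n - 1)%Z /\
                Ln n x = (2 ^ Z.of_nat (n - 1))%Z.

(* digit sequence of (0.b_{n-1} b_n b_{n+1} ...)_2 : j-th digit is b_{n-2+j} *)
Definition tail_digits (b : nat -> nat) (n : nat) : nat -> nat :=
  fun j => b (n - 2 + j)%nat.

(* digit sequence of (0.0 1 b_1 b_2 ...)_2 *)
Definition shifted_digits (b : nat -> nat) : nat -> nat :=
  fun j => match j with
           | 0%nat | 1%nat => 0%nat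
           | 2%nat => 1%nat
           | S (S k) => b k
           end.

(* Put m = 2^(n-2) and let f = (0.b_{n-1} b_n ...)_2, so that y = m sqrt 2 - f is an
   integer.  As (0.01 b_1 b_2 ...)_2 = sqrt 2 / 4, the hypothesis says f <= sqrt 2 / 4,
   and expanding (m sqrt 2 - f)^2 gives 2m^2 - m < y^2 <= 2m^2.  Then x = 2m - y
   satisfies x (4m - x) = 4m^2 - y^2 in [2m^2, 2m^2 + m), i.e. L_n(x) = 2m = 2^(n-1). *)
From Stdlib Require Import Reals ZArith Arith Lra Lia Psatz.
From Coquelicot Require Import Coquelicot.
Open Scope R_scope.

Definition binary_digits (c : nat -> nat) : Prop :=
  forall j, (1 <= j)%nat -> (c j <= 1)%nat.

Section BinaryValue.

Variable c : nat -> nat.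
Hypothesis hc : binary_digits c.

Lemma binval_term_bounds k :
  0 <= INR (c (S k)) / 2 ^ S k <= (/ 2) ^ k.
Proof.
  assert (c01 : 0 <= INR (c (S k)) <= 1).
  { split; [apply pos_INR | apply (le_INR _ 1), hc; lia]. }
  assert (pos : 0 < / 2 ^ k) by (apply Rinv_0_lt_compat, pow_lt; lra).
  rewrite pow_inv; simpl; unfold Rdiv; rewrite Rinv_mult.
  nra.
Qed.

Lemma ex_series_binval : ex_series (fun k => INR (c (S k)) / 2 ^ S k).
Proof.
  apply (@ex_series_le R_AbsRing R_CompleteNormedModule _ (fun k => (/ 2) ^ k)).
  - intros k; change (Rabs (INR (c (S k)) / 2 ^ S k) <= (/ 2) ^ k).
    destruct (binval_term_bounds k) as [ge0 le].
    rewrite Rabs_pos_eq; assumption.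
  - apply ex_series_geom; rewrite Rabs_pos_eq; lra.
Qed.

Lemma binval_ge0 : 0 <= binval c.
Proof.
  assert (zero : Series (fun _ : nat => 0) = 0).
  { rewrite (Series_ext _ (fun _ => 0 * 0)), Series_scal_l by (intros; ring); ring. }
  unfold binval; rewrite <- zero.
  apply Series_le; [|exact ex_series_binval].
  intros k; split; [lra | apply binval_term_bounds].
Qed.

Lemma binval_first_digit :
  binval c = (INR (c 1%nat) + binval (fun j => c (S j))) / 2.
Proof.
  unfold binval; rewrite (Series_incr_1 _ ex_series_binval).
  rewrite (Series_ext _ (fun k => / 2 * (INR (c (S (S k))) / 2 ^ S k))).
  - rewrite Series_scal_l; simpl; field.
  - intros k; simpl; field; apply pow_nonzero; lra.
Qed.

End BinaryValue.

Lemma binval_ext (c d : nat -> nat) :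
  (forall j, (1 <= j)%nat -> c j = d j) -> binval c = binval d.
Proof.
  intros cd; apply Series_ext; intros k; rewrite cd by lia; reflexivity.
Qed.

Lemma binary_digits_drop (c : nat -> nat) p :
  binary_digits c -> binary_digits (fun j => c (p + j)%nat).
Proof. intros hc j hj; apply hc; lia. Qed.

(* Multiplying by 2^p moves the binary point p places; the digits passed over form z. *)
Lemma binval_mul_pow2 (c : nat -> nat) p : binary_digits c ->
  exists z : Z, 2 ^ p * binval c = IZR z + binval (fun j => c (p + j)%nat).
Proof.
  intros hc; induction p as [|p [z IH]].
  - exists 0%Z; rewrite Rplus_0_l, Rmult_1_l; reflexivity.
  - exists (2 * z + Z.of_nat (c (S p)))%Z.
    rewrite (binval_first_digit _ (binary_digits_drop _ p hc)) in IH.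
    rewrite (binval_ext (fun j => c (p + S j)%nat) (fun j => c (S p + j)%nat)) in IH
      by (intros j _; f_equal; lia).
    rewrite plus_IZR, mult_IZR, <- INR_IZR_INZ, Nat.add_1_r in *.
    replace (2 ^ S p * binval c) with (2 * (2 ^ p * binval c)) by (simpl; ring).
    rewrite IH; simpl (IZR 2); field.
Qed.

Lemma binval_shifted_digits (b : nat -> nat) : binary_digits b ->
  binval (shifted_digits b) = (1 + binval b) / 4.
Proof.
  intros hb.
  assert (hs : binary_digits (shifted_digits b)).
  { intros [|[|[|j]]] hj; simpl; auto; apply hb; lia. }
  rewrite (binval_first_digit _ hs).
  rewrite (binval_first_digit (fun j => shifted_digits b (S j)) (binary_digits_drop _ 1 hs)).
  simpl.
  rewrite (binval_ext _ b) by (intros [|j] hj; [lia | reflexivity]).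
  field.
Qed.

Lemma sqr_bounds_near_sqrt2 (s m f : R) :
  s * s = 2 -> 0 < s -> 1 <= m -> 0 <= f <= s / 4 ->
  2 * (m * m) - m < (m * s - f) * (m * s - f) <= 2 * (m * m).
Proof.
  intros ss s0 m1 [f0 fs].
  assert (cross : 2 * m * s * f <= m).
  { assert (m * s * f <= m * s * (s / 4)) by (apply Rmult_le_compat_l; nra).
    nra. }
  replace (2 * (m * m)) with (m * m * (s * s)) by (rewrite ss; ring).
  split.
  - destruct (Req_dec f 0) as [f_eq0|f_neq0]; [subst f; nra|].
    assert (0 < f * f) by nra.
    nra.
  - assert (0 <= f * (2 * m * s - f)) by (apply Rmult_le_pos; nra).
    nra.
Qed.

Lemma undesirable_of_sqr_bounds n (y : Z) : (2 <= n)%nat ->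
  let m := (2 ^ Z.of_nat (n - 2))%Z in
  (2 * (m * m) - m < y * y <= 2 * (m * m))%Z -> undesirable n.
Proof.
  intros hn m [lo hi].
  assert (m_pos : (0 < m)%Z) by (apply Z.pow_pos_nonneg; lia).
  assert (pow_n : (2 ^ Z.of_nat n = 4 * m)%Z).
  { unfold m; replace (Z.of_nat n) with (Z.of_nat (n - 2) + 2)%Z by lia.
    rewrite Z.pow_add_r by lia; ring. }
  assert (pow_n1 : (2 ^ Z.of_nat (n - 1) = 2 * m)%Z).
  { unfold m; replace (Z.of_nat (n - 1)) with (Z.of_nat (n - 2) + 1)%Z by lia.
    rewrite Z.pow_add_r by lia; ring. }
  exists (2 * m - y)%Z; rewrite pow_n; split; [nia|].
  unfold Ln; rewrite pow_n, pow_n1; fold m.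
  (* x (4m - x) = 4m^2 - y^2 = 2m * m + (2m^2 - y^2), with remainder in [0, m) *)
  symmetry; apply (Z.div_unique_pos _ _ _ (2 * (m * m) - y * y)); nia.
Qed.

Theorem lemma2p3 (b : nat -> nat)
  (hb01 : forall j, (1 <= j)%nat -> (b j <= 1)%nat)
  (hsqrt2 : sqrt 2 = 1 + binval b)
  (n : nat) (hn : (2 <= n)%nat)
  (hcond : binval (tail_digits b n) <= binval (shifted_digits b)) :
  undesirable n.
Proof.
  set (m := (2 ^ Z.of_nat (n - 2))%Z).
  set (f := binval (tail_digits b n)).
  destruct (binval_mul_pow2 b (n - 2) hb01) as [z hz].
  assert (hm : IZR m = 2 ^ (n - 2)) by (unfold m; rewrite <- pow_IZR; reflexivity).
  assert (hy : IZR (m + z) = IZR m * sqrt 2 - f).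
  { rewrite plus_IZR, hsqrt2, hm, Rmult_plus_distr_l, hz; unfold f, tail_digits; ring. }
  assert (hf : 0 <= f <= sqrt 2 / 4).
  { split; [apply binval_ge0; intros j hj; apply hb01; lia|].
    rewrite binval_shifted_digits, <- hsqrt2 in hcond by exact hb01; exact hcond. }
  assert (hs : sqrt 2 * sqrt 2 = 2) by (apply sqrt_sqrt; lra).
  assert (hm1 : 1 <= IZR m) by (rewrite hm; apply pow_R1_Rle; lra).
  destruct (sqr_bounds_near_sqrt2 _ _ _ hs (sqrt_lt_R0 2 ltac:(lra)) hm1 hf) as [lo hi].
  rewrite <- hy, <- !mult_IZR in lo, hi.
  apply (undesirable_of_sqr_bounds n (m + z) hn); split.
  - apply lt_IZR; rewrite minus_IZR, !mult_IZR in *; exact lo.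
  - apply le_IZR; rewrite !mult_IZR in *; exact hi.
Qed.
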